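(* Let $P>0$ and let $\{\theta_l\}_{l=1}^\infty$ be i.i.d. $\mathrm{Uniform}(0,2\pi)$ random variables. For each integer $i\geq 0$ define $$\bar R(i):=\mathbb{E}\Big[\log\Big(1+\Big|\textstyle\sum_{l=1}^i e^{j\theta_l}\Big|^2P\Big)\Big]$$ (with the empty sum equal to $0$). Then $\bar R(i+1)>\bar R(i)$ for all $i\geq 0$, and $\lim_{i\to\infty}\bar R(i)=\infty$.
   Context: $\log$ is the logarithm in a fixed base. *)

From Stdlib Require Import Reals List.
From Coquelicot Require Import Coquelicot.
Open Scope R_scope.

Definition ejt (t : R) : C := (cos t, sin t).

Definition phasor_sum (l : list R) : C :=
  fold_right (fun t acc => Cplus (ejt t) acc) (RtoC 0) l.

(* Expectation of f(theta_1,...,theta_n) for theta_1..theta_n i.i.d.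
   Uniform(0, 2 pi): iterated normalized integrals over [0, 2 pi]
   (the product of the uniform laws). *)
Fixpoint unif_avg (n : nat) (f : list R -> R) : R :=
  match n with
  | O => f nil
  | S m => / (2 * PI) * RInt (fun t => unif_avg m (fun l => f (t :: l))) 0 (2 * PI)
  end.

Definition logb (b x : R) : R := ln x / ln b.

Definition Rbar_avg (b P : R) (i : nat) : R :=
  unif_avg i (fun l => logb b (1 + (Cmod (phasor_sum l)) ^ 2 * P)).

From Stdlib Require Import Reals List Lra Lia Psatz FunctionalExtensionality Nsatz.
From Coquelicot Require Import Coquelicot.
Open Scope R_scope.

(* Let S_m be the sum of m i.i.d. uniform phasors and F(z) = log_b (1 + P |z|^2), so that
   R(i) = E F(S_i); below, [phasor_mean m G z] is E G(z + S_m) and [circle_mean G z] is the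
   mean of G over the unit circle around z.  Splitting off the last phasor gives
   R(i+1) = E (circle_mean F)(S_i), so strict monotonicity follows from F < circle_mean F:
   writing 1 + P |z + w|^2 = alpha |1 + zeta w|^2 with |zeta| < 1 and alpha > 1 + P |z|^2,
   Jensen's formula (ln |1 + zeta w|^2 has mean 0 on |w| = 1) gives circle_mean F z = log_b alpha.
   For growth, ln (1 + P X) dominates a quadratic polynomial in X that is tight at X = n;
   with E|S_n|^2 = n and E|S_n|^4 = 2n^2 - n this gives R(n) >= log_b (1 + P n) / 2. *)

Lemma two_PI_pos : 0 < 2 * PI.
Proof. pose proof PI_RGT_0; lra. Qed.

Lemma ln_gt_0 x : 1 < x -> 0 < ln x.
Proof. intro Hx; rewrite <- ln_1; apply ln_increasing; lra. Qed.

Lemma ln_le_sub_1 x : 0 < x -> ln x <= x - 1.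
Proof.
  intro Hx. rewrite <- (ln_exp (x - 1)). apply ln_le; [exact Hx |].
  pose proof (exp_ineq1_le (x - 1)); lra.
Qed.

(* Coquelicot states these over an arbitrary complete normed module; fixing the instance to R
   lets them rewrite real integrals and keeps the resulting equations at type R. *)
Lemma ex_derive_continuous_R (f : R -> R) x : ex_derive f x -> continuous f x.
Proof. apply (ex_derive_continuous (K := R_AbsRing) (V := R_NormedModule)). Qed.

Lemma ex_RInt_continuous_R (f : R -> R) a b :
  (forall t, Rmin a b <= t <= Rmax a b -> continuous f t) -> ex_RInt f a b.
Proof. apply (ex_RInt_continuous (V := R_CompleteNormedModule)). Qed.

Lemma ex_RInt_scal_R (f : R -> R) a b k :
  ex_RInt f a b -> ex_RInt (fun t => k * f t) a b.
Proof. apply (ex_RInt_scal (V := R_CompleteNormedModule)). Qed.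

Lemma RInt_scal_R (f : R -> R) a b k :
  ex_RInt f a b -> RInt (fun t => k * f t) a b = k * RInt f a b.
Proof. apply (RInt_scal (V := R_CompleteNormedModule)). Qed.

Lemma RInt_plus_R (f g : R -> R) a b : ex_RInt f a b -> ex_RInt g a b ->
  RInt (fun t => f t + g t) a b = RInt f a b + RInt g a b.
Proof. apply (RInt_plus (V := R_CompleteNormedModule)). Qed.

Lemma RInt_minus_R (f g : R -> R) a b : ex_RInt f a b -> ex_RInt g a b ->
  RInt (fun t => f t - g t) a b = RInt f a b - RInt g a b.
Proof. apply (RInt_minus (V := R_CompleteNormedModule)). Qed.

Lemma RInt_ext_R (f g : R -> R) a b :
  (forall t, Rmin a b < t < Rmax a b -> f t = g t) -> RInt f a b = RInt g a b.
Proof. apply (RInt_ext (V := R_CompleteNormedModule)). Qed.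

Lemma RInt_const_R a b k : RInt (fun _ => k) a b = (b - a) * k.
Proof. apply (RInt_const (V := R_CompleteNormedModule)). Qed.

Lemma RInt_derive_R (f F : R -> R) a b :
  (forall t, is_derive F t (f t)) -> (forall t, continuous f t) ->
  RInt f a b = F b - F a.
Proof.
  intros HF Hf. apply is_RInt_unique.
  apply (is_RInt_derive (V := R_CompleteNormedModule)); auto.
Qed.

Lemma locally_lt_continuous (f : R -> R) x c :
  continuous f x -> f x < c -> locally x (fun y => f y < c).
Proof. intros Hf Hc. apply (Hf (fun z => z < c)), open_lt, Hc. Qed.

Lemma continuity_2d_pt_cos_snd x y : continuity_2d_pt (fun _ t => cos t) x y.
Proof.
  apply (continuity_1d_2d_pt_comp cos (fun _ t => t));
    [apply continuity_cos | apply continuity_2d_pt_id2].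
Qed.

Lemma continuity_2d_pt_sin_snd x y : continuity_2d_pt (fun _ t => sin t) x y.
Proof.
  apply (continuity_1d_2d_pt_comp sin (fun _ t => t));
    [apply continuity_sin | apply continuity_2d_pt_id2].
Qed.

Ltac continuity_2d :=
  repeat first
    [ apply continuity_2d_pt_plus | apply continuity_2d_pt_mult
    | apply continuity_2d_pt_id1 | apply continuity_2d_pt_id2
    | apply continuity_2d_pt_const
    | apply continuity_2d_pt_cos_snd | apply continuity_2d_pt_sin_snd ].

Lemma fun2_ext (G H : R -> R -> R) : (forall x y, G x y = H x y) -> G = H.
Proof.
  intro E; apply functional_extensionality; intro x.
  apply functional_extensionality; intro y; apply E.
Qed.

Definition continuous2 (G : R -> R -> R) := forall x y, continuity_2d_pt G x y.

Definition circle_mean (H : R -> R -> R) (x y : R) : R :=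
  / (2 * PI) * RInt (fun t => H (x + cos t) (y + sin t)) 0 (2 * PI).

Definition phasor_mean (m : nat) (G : R -> R -> R) (x y : R) : R :=
  unif_avg m (fun l => G (x + fst (phasor_sum l)) (y + snd (phasor_sum l))).

Lemma continuous_circle_shift H x y t :
  continuous2 H -> continuous (fun t => H (x + cos t) (y + sin t)) t.
Proof.
  intro HH.
  apply (continuous_comp_2 (fun t => x + cos t) (fun t => y + sin t) H).
  - apply ex_derive_continuous_R; auto_derive; auto.
  - apply ex_derive_continuous_R; auto_derive; auto.
  - apply continuity_2d_pt_filterlim, HH.
Qed.

Lemma ex_RInt_circle_shift H x y :
  continuous2 H -> ex_RInt (fun t => H (x + cos t) (y + sin t)) 0 (2 * PI).
Proof. intro HH; apply ex_RInt_continuous_R; intros; apply continuous_circle_shift, HH. Qed.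

Lemma continuous2_circle_mean H : continuous2 H -> continuous2 (circle_mean H).
Proof.
  intros HH x0 y0. unfold circle_mean.
  apply (continuity_2d_pt_mult (fun _ _ => / (2 * PI))); [apply continuity_2d_pt_const |].
  intro eps. pose proof two_PI_pos as Hpi.
  assert (Heta : 0 < eps / (2 * PI + 1)) by (apply Rdiv_lt_0_compat; [apply cond_pos | lra]).
  (* every shifted circle around a point within 1 of (x0, y0) stays in this square *)
  destruct (uniform_continuity_2d H (x0 - 2) (x0 + 2) (y0 - 2) (y0 + 2)
              (fun x y _ _ => HH x y) (mkposreal _ Heta)) as [d Hd].
  assert (Hd1 : 0 < Rmin d 1) by (apply Rmin_pos; [apply cond_pos | lra]).
  exists (mkposreal _ Hd1). intros x y Hx Hy. simpl in Hx, Hy.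
  pose proof (Rmin_l d 1). pose proof (Rmin_r d 1).
  apply Rabs_def2 in Hx as Hx'. apply Rabs_def2 in Hy as Hy'.
  rewrite <- RInt_minus_R by (apply ex_RInt_circle_shift; auto).
  apply Rle_lt_trans with ((2 * PI - 0) * (eps / (2 * PI + 1))).
  - apply abs_RInt_le_const; [lra | |].
    + apply ex_RInt_continuous_R; intros t _.
      apply (continuous_minus (fun t => H (x + cos t) (y + sin t))
                              (fun t => H (x0 + cos t) (y0 + sin t)));
        apply continuous_circle_shift, HH.
    + intros t _. left. pose proof (COS_bound t). pose proof (SIN_bound t).
      apply Hd; try lra.
      * replace (x + cos t - (x0 + cos t)) with (x - x0) by ring. lra.
      * replace (y + sin t - (y0 + sin t)) with (y - y0) by ring. lra.
  - destruct eps as [e He]; simpl.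
    apply Rmult_lt_reg_r with (2 * PI + 1); [lra |].
    replace ((2 * PI - 0) * (e / (2 * PI + 1)) * (2 * PI + 1)) with (2 * PI * e)
      by (field; lra).
    nra.
Qed.

Lemma circle_mean_le G H x y : continuous2 G -> continuous2 H ->
  (forall x y, G x y <= H x y) -> circle_mean G x y <= circle_mean H x y.
Proof.
  intros HG HH Hle. pose proof two_PI_pos. unfold circle_mean.
  apply Rmult_le_compat_l; [left; apply Rinv_0_lt_compat; lra |].
  apply RInt_le; [lra | apply ex_RInt_circle_shift; auto | apply ex_RInt_circle_shift; auto |].
  intros; apply Hle.
Qed.

Lemma circle_mean_lt G H x y : continuous2 G -> continuous2 H ->
  (forall x y, G x y < H x y) -> circle_mean G x y < circle_mean H x y.
Proof.
  intros HG HH Hlt. pose proof two_PI_pos. unfold circle_mean.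
  apply Rmult_lt_compat_l; [apply Rinv_0_lt_compat; lra |].
  apply RInt_lt; [lra | intros; apply continuous_circle_shift; auto
                 | intros; apply continuous_circle_shift; auto |].
  intros; apply Hlt.
Qed.

Lemma circle_mean_lin a c G H x y : continuous2 G -> continuous2 H ->
  circle_mean (fun x y => a * G x y + c * H x y) x y
  = a * circle_mean G x y + c * circle_mean H x y.
Proof.
  intros HG HH. unfold circle_mean.
  pose proof (ex_RInt_circle_shift G x y HG). pose proof (ex_RInt_circle_shift H x y HH).
  rewrite RInt_plus_R by (apply ex_RInt_scal_R; auto).
  rewrite !RInt_scal_R by auto.
  ring.
Qed.

Lemma phasor_mean_O G : phasor_mean 0 G = G.
Proof.
  apply fun2_ext; intros x y.
  unfold phasor_mean; simpl. rewrite !Rplus_0_r. reflexivity.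
Qed.

Lemma phasor_mean_S m G : phasor_mean (S m) G = circle_mean (phasor_mean m G).
Proof.
  apply fun2_ext; intros x y.
  unfold phasor_mean, circle_mean; simpl. do 2 f_equal.
  apply functional_extensionality; intro t. f_equal.
  apply functional_extensionality; intro l. simpl. rewrite !Rplus_assoc. reflexivity.
Qed.

Lemma phasor_mean_S_last m G : phasor_mean (S m) G = phasor_mean m (circle_mean G).
Proof.
  revert G; induction m as [| m IH]; intro G.
  - rewrite phasor_mean_S, !phasor_mean_O. reflexivity.
  - rewrite phasor_mean_S, IH, <- phasor_mean_S. reflexivity.
Qed.

Lemma continuous2_phasor_mean m G : continuous2 G -> continuous2 (phasor_mean m G).
Proof.
  intro HG; induction m as [| m IH].
  - rewrite phasor_mean_O; exact HG.
  - rewrite phasor_mean_S; apply continuous2_circle_mean, IH.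
Qed.

Lemma phasor_mean_le m G H : continuous2 G -> continuous2 H ->
  (forall x y, G x y <= H x y) -> forall x y, phasor_mean m G x y <= phasor_mean m H x y.
Proof.
  intros HG HH Hle; induction m as [| m IH]; intros x y.
  - rewrite !phasor_mean_O; apply Hle.
  - rewrite !phasor_mean_S; apply circle_mean_le; auto using continuous2_phasor_mean.
Qed.

Lemma phasor_mean_lt m G H : continuous2 G -> continuous2 H ->
  (forall x y, G x y < H x y) -> forall x y, phasor_mean m G x y < phasor_mean m H x y.
Proof.
  intros HG HH Hlt; induction m as [| m IH]; intros x y.
  - rewrite !phasor_mean_O; apply Hlt.
  - rewrite !phasor_mean_S; apply circle_mean_lt; auto using continuous2_phasor_mean.
Qed.

Lemma phasor_mean_lin m a c G H : continuous2 G -> continuous2 H ->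
  forall x y, phasor_mean m (fun x y => a * G x y + c * H x y) x y
              = a * phasor_mean m G x y + c * phasor_mean m H x y.
Proof.
  intros HG HH; induction m as [| m IH]; intros x y.
  - rewrite !phasor_mean_O; reflexivity.
  - rewrite !phasor_mean_S.
    replace (phasor_mean m (fun x y => a * G x y + c * H x y))
      with (fun x y => a * phasor_mean m G x y + c * phasor_mean m H x y)
      by (apply fun2_ext; intros; rewrite IH; reflexivity).
    apply circle_mean_lin; apply continuous2_phasor_mean; assumption.
Qed.

Lemma phasor_mean_sqnorm m :
  phasor_mean m (fun x y => x * x + y * y) = (fun x y => x * x + y * y + INR m).
Proof.
  induction m as [| m IH].
  - rewrite phasor_mean_O.
    apply fun2_ext; intros; simpl; ring.
  - rewrite phasor_mean_S, IH.
    apply fun2_ext; intros x0 y0. unfold circle_mean.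
    rewrite (RInt_derive_R _
      (fun t => (x0 * x0 + y0 * y0 + 1 + INR m) * t + 2 * x0 * sin t - 2 * y0 * cos t)).
    + rewrite sin_2PI, cos_2PI, sin_0, cos_0, S_INR. pose proof two_PI_pos. field. lra.
    + intro t. auto_derive; auto. pose proof (sin2_cos2 t). unfold Rsqr in *. nsatz.
    + intro t. apply ex_derive_continuous_R. auto_derive; auto.
Qed.

Lemma phasor_mean_sqnorm_sq m :
  phasor_mean m (fun x y => (x * x + y * y) * (x * x + y * y))
  = (fun x y => (x * x + y * y) * (x * x + y * y) + 4 * INR m * (x * x + y * y)
                + 2 * INR m * INR m - INR m).
Proof.
  induction m as [| m IH].
  - rewrite phasor_mean_O. apply fun2_ext; intros; simpl; ring.
  - rewrite phasor_mean_S, IH.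
    apply fun2_ext; intros x y. unfold circle_mean.
    set (r := x * x + y * y). set (k := INR m).
    (* expand |z + e^(jt)|^2 = r + 1 + 2 (x cos t + y sin t) and integrate term by term *)
    rewrite (RInt_derive_R _
      (fun t => ((r + 1) * (r + 1) + 4 * k * (r + 1) + 2 * k * k - k) * t
                + (4 * (r + 1) + 8 * k) * (x * sin t - y * cos t)
                + 2 * x * x * (t + sin t * cos t) + 4 * x * y * (sin t * sin t)
                + 2 * y * y * (t - sin t * cos t))).
    + rewrite sin_2PI, cos_2PI, sin_0, cos_0, S_INR. pose proof two_PI_pos.
      unfold r, k. field. lra.
    + intro t. auto_derive; auto. pose proof (sin2_cos2 t). unfold Rsqr in *. unfold r. nsatz.
    + intro t. apply ex_derive_continuous_R. auto_derive; auto.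
Qed.

Definition rate (b P x y : R) : R := logb b (1 + (x * x + y * y) * P).

Lemma continuous2_rate b P : 0 < P -> continuous2 (rate b P).
Proof.
  intros HP x y. unfold rate, logb, Rdiv.
  apply continuity_2d_pt_mult; [| apply continuity_2d_pt_const].
  apply (continuity_1d_2d_pt_comp ln (fun x y => 1 + (x * x + y * y) * P)).
  - apply continuity_pt_filterlim, ex_derive_continuous_R. auto_derive. nra.
  - continuity_2d.
Qed.

Lemma Rbar_avg_phasor_mean b P i : Rbar_avg b P i = phasor_mean i (rate b P) 0 0.
Proof.
  unfold Rbar_avg, phasor_mean, rate. f_equal.
  apply functional_extensionality; intro l.
  unfold Cmod. rewrite pow2_sqrt by nra. do 3 f_equal. ring.
Qed.

Section LogCircleIntegral.

Variables u v : R.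

(* circle_den s t = |1 + s (u - j v) e^(jt)|^2; lin_cos and lin_sin are the real and
   imaginary parts of (u - j v) e^(jt) *)
Definition lin_cos (t : R) : R := u * cos t + v * sin t.
Definition lin_sin (t : R) : R := u * sin t - v * cos t.
Definition circle_den (s t : R) : R := 1 + s * s * (u * u + v * v) + 2 * s * lin_cos t.
Definition dlog_circle_den (s t : R) : R :=
  (2 * s * (u * u + v * v) + 2 * lin_cos t) / circle_den s t.

Lemma lin_cos_sin_sq t : lin_cos t * lin_cos t + lin_sin t * lin_sin t = u * u + v * v.
Proof. unfold lin_cos, lin_sin. pose proof (sin2_cos2 t). unfold Rsqr in *. nsatz. Qed.

Lemma circle_den_pos s t : s * s * (u * u + v * v) < 1 -> 0 < circle_den s t.
Proof. intro Hs. pose proof (lin_cos_sin_sq t). unfold circle_den. nra. Qed.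

Lemma is_derive_ln_circle_den s t : s * s * (u * u + v * v) < 1 ->
  is_derive (fun s => ln (circle_den s t)) s (dlog_circle_den s t).
Proof.
  intro Hs. pose proof (circle_den_pos s t Hs).
  unfold dlog_circle_den, circle_den in *. auto_derive; [lra | field; lra].
Qed.

Lemma continuity_2d_pt_dlog_circle_den s t : s * s * (u * u + v * v) < 1 ->
  continuity_2d_pt dlog_circle_den s t.
Proof.
  intro Hs. unfold dlog_circle_den, Rdiv.
  apply continuity_2d_pt_mult.
  - unfold lin_cos; continuity_2d.
  - apply continuity_2d_pt_inv; [unfold circle_den, lin_cos; continuity_2d |].
    apply Rgt_not_eq, circle_den_pos, Hs.
Qed.

(* (2/s) arg (1 + s (u - j v) e^(jt)); the real part of that number stays positive *)
Definition dlog_primitive (s t : R) : R :=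
  if Req_EM_T s 0 then 2 * lin_sin t
  else 2 / s * atan (s * lin_sin t / (1 + s * lin_cos t)).

Lemma is_derive_dlog_primitive s t : s * s * (u * u + v * v) < 1 ->
  is_derive (dlog_primitive s) t (dlog_circle_den s t).
Proof.
  intro Hs. pose proof (circle_den_pos s t Hs) as HD. pose proof (lin_cos_sin_sq t) as Hq.
  assert (H1 : 0 < 1 + s * lin_cos t) by nra.
  unfold dlog_primitive. destruct (Req_EM_T s 0) as [-> | Hs0].
  - unfold dlog_circle_den, circle_den, lin_sin, lin_cos in *. auto_derive; auto. field; lra.
  - assert (Hw : is_derive (fun t => s * lin_sin t / (1 + s * lin_cos t)) t
        (s * (lin_cos t + s * (lin_cos t * lin_cos t + lin_sin t * lin_sin t))
         / (1 + s * lin_cos t) ^ 2)).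
    { unfold lin_sin, lin_cos in *. auto_derive; [lra | field; lra]. }
    pose proof (is_derive_scal _ t (2 / s) _
                  (is_derive_comp atan _ t _ _ (is_derive_atan _) Hw)) as Hc.
    match type of Hc with is_derive _ _ ?d => replace (dlog_circle_den s t) with d end.
    + exact Hc.
    + unfold scal; simpl; unfold mult; simpl. unfold dlog_circle_den, circle_den, Rsqr.
      unfold circle_den in HD. rewrite <- Hq in HD |- *. field. repeat split; lra.
Qed.

Lemma RInt_dlog_circle_den s : s * s * (u * u + v * v) < 1 ->
  RInt (dlog_circle_den s) 0 (2 * PI) = 0.
Proof.
  intro Hs. rewrite (RInt_derive_R _ (dlog_primitive s)).
  - unfold dlog_primitive, lin_sin, lin_cos.
    rewrite sin_2PI, cos_2PI, sin_0, cos_0. destruct (Req_EM_T s 0); lra.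
  - intro t; apply is_derive_dlog_primitive, Hs.
  - intro t. apply ex_derive_continuous_R. pose proof (circle_den_pos s t Hs).
    unfold dlog_circle_den, circle_den, lin_cos in *. auto_derive. lra.
Qed.

Definition log_circle_integral (s : R) : R := RInt (fun t => ln (circle_den s t)) 0 (2 * PI).

Lemma is_derive_log_circle_integral s : s * s * (u * u + v * v) < 1 ->
  is_derive log_circle_integral s 0.
Proof.
  intro Hs.
  assert (Hloc : locally s (fun z => z * z * (u * u + v * v) < 1)).
  { apply (locally_lt_continuous (fun z => z * z * (u * u + v * v))); [| exact Hs].
    apply ex_derive_continuous_R; auto_derive; auto. }
  rewrite <- (RInt_dlog_circle_den s Hs). unfold log_circle_integral.
  replace (RInt (dlog_circle_den s) 0 (2 * PI))
    with (RInt (fun t => Derive (fun z => ln (circle_den z t)) s) 0 (2 * PI))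
    by (apply RInt_ext; intros t _; apply is_derive_unique, is_derive_ln_circle_den, Hs).
  apply (is_derive_RInt_param (fun z t => ln (circle_den z t))).
  - apply filter_imp with (2 := Hloc). intros z Hz t _.
    eexists; apply is_derive_ln_circle_den, Hz.
  - intros t _. apply continuity_2d_pt_ext_loc with dlog_circle_den.
    + destruct Hloc as [d Hd]. exists d. intros z w Hz _.
      symmetry; apply is_derive_unique, is_derive_ln_circle_den, Hd, Hz.
    + apply continuity_2d_pt_dlog_circle_den, Hs.
  - apply filter_imp with (2 := Hloc). intros z Hz.
    apply ex_RInt_continuous_R. intros t _. apply ex_derive_continuous_R.
    pose proof (circle_den_pos z t Hz). unfold circle_den, lin_cos in *. auto_derive. lra.
Qed.

(* Jensen's formula for 1 + zeta e^(jt) with zeta = u - j v, |zeta| < 1 *)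
Lemma RInt_ln_circle : u * u + v * v < 1 ->
  RInt (fun t => ln (1 + u * u + v * v + 2 * (u * cos t + v * sin t))) 0 (2 * PI) = 0.
Proof.
  intro Huv.
  assert (Hin : forall s, 0 <= s <= 1 -> s * s * (u * u + v * v) < 1).
  { intros s Hs. assert (s * s <= 1) by nra. nra. }
  assert (H0 : log_circle_integral 0 = 0).
  { unfold log_circle_integral, circle_den.
    rewrite (RInt_ext_R _ (fun _ => 0)); [rewrite RInt_const_R; ring |].
    intros t _. replace (1 + 0 * 0 * (u * u + v * v) + 2 * 0 * lin_cos t) with 1 by ring.
    apply ln_1. }
  destruct (MVT_gen log_circle_integral 0 1 (fun _ => 0)) as [c [_ Hc]];
    rewrite ?Rmin_left, ?Rmax_right by lra.
  - intros s Hs. apply is_derive_log_circle_integral, Hin; lra.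
  - intros s Hs. apply continuity_pt_filterlim, ex_derive_continuous_R.
    eexists; apply is_derive_log_circle_integral, Hin; lra.
  - transitivity (log_circle_integral 1); [| lra].
    apply RInt_ext; intros t _. unfold circle_den, lin_cos. f_equal; ring.
Qed.

End LogCircleIntegral.

Lemma sqnorm_shift_factor P x y : 0 < P ->
  exists al u v, 1 + (x * x + y * y) * P < al /\ u * u + v * v < 1 /\
    forall t, 1 + ((x + cos t) * (x + cos t) + (y + sin t) * (y + sin t)) * P
              = al * (1 + u * u + v * v + 2 * (u * cos t + v * sin t)).
Proof.
  intro HP.
  set (r := x * x + y * y). assert (Hr : 0 <= r) by (unfold r; nra).
  set (A := 1 + P * (r + 1)). set (w := 1 + P * r - P).
  set (Dq := sqrt (w * w + 4 * P)).
  assert (HDq : Dq * Dq = w * w + 4 * P) by (apply sqrt_sqrt; nra).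
  assert (HDq0 : 0 <= Dq) by apply sqrt_pos.
  (* al is the larger root of al^2 - A al + P^2 r = 0, whose discriminant is w^2 + 4 P *)
  set (al := (A + Dq) / 2).
  assert (Hroot : al * al + P * P * r = A * al).
  { unfold al. replace ((A + Dq) / 2 * ((A + Dq) / 2)) with ((A * A + 2 * A * Dq + Dq * Dq) / 4)
      by field.
    rewrite HDq. unfold A, w. field. }
  assert (HwDq : w < Dq) by (destruct (Rlt_le_dec w 0); nra).
  assert (Hal : 1 + r * P < al) by (unfold al, A, w in *; lra).
  assert (HA : A * A - 4 * (P * P * r) = w * w + 4 * P) by (unfold A, w; ring).
  assert (Hzeta : P * P * r < al * al).
  { assert (0 < A) by (unfold A; nra). unfold al. nra. }
  assert (Hal0 : 0 < al) by nra.
  exists al, (P * x / al), (P * y / al). split; [| split].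
  - exact Hal.
  - apply (Rmult_lt_reg_r (al * al)); [nra |].
    replace ((P * x / al * (P * x / al) + P * y / al * (P * y / al)) * (al * al))
      with (P * P * r) by (unfold r; field; lra). lra.
  - intro t. pose proof (sin2_cos2 t). unfold Rsqr in *.
    apply (Rmult_eq_reg_r al); [| lra].
    transitivity (A * al + 2 * P * al * (x * cos t + y * sin t)).
    + unfold A, r in *. nsatz.
    + rewrite <- Hroot. unfold r. field. lra.
Qed.

Lemma rate_lt_circle_mean b P x y : 1 < b -> 0 < P ->
  rate b P x y < circle_mean (rate b P) x y.
Proof.
  intros Hb HP. pose proof two_PI_pos. pose proof (ln_gt_0 b Hb) as Hlb.
  destruct (sqnorm_shift_factor P x y HP) as (al & u & v & Hal & Huv & Hfac).
  assert (Hpos : forall t, 0 < 1 + u * u + v * v + 2 * (u * cos t + v * sin t)).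
  { intro t. assert (0 < al) by nra.
    apply (Rmult_lt_reg_l al); [lra |]. rewrite <- Hfac, Rmult_0_r.
    pose proof (Rle_0_sqr (x + cos t)). pose proof (Rle_0_sqr (y + sin t)).
    unfold Rsqr in *. nra. }
  unfold circle_mean, rate, logb.
  rewrite (RInt_ext_R _ (fun t => / ln b * ln al
                     + / ln b * ln (1 + u * u + v * v + 2 * (u * cos t + v * sin t)))).
  2: { intros t _. rewrite Hfac, ln_mult by (nra || apply Hpos). unfold Rdiv. ring. }
  assert (Hint : ex_RInt (fun t => ln (1 + u * u + v * v + 2 * (u * cos t + v * sin t)))
                         0 (2 * PI)).
  { apply ex_RInt_continuous_R; intros t _. apply ex_derive_continuous_R.
    pose proof (Hpos t). auto_derive. lra. }
  rewrite RInt_plus_R, RInt_const_R, RInt_scal_R, RInt_ln_circle by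
    (auto using ex_RInt_scal_R, ex_RInt_const).
  replace (/ (2 * PI) * ((2 * PI - 0) * (/ ln b * ln al) + / ln b * 0)) with (ln al / ln b)
    by (field; lra).
  apply Rmult_lt_compat_r; [apply Rinv_0_lt_compat, Hlb |].
  apply ln_increasing; [nra | exact Hal].
Qed.

Lemma ln_1_plus_concave a y : 0 < a -> 0 <= y <= 1 -> y * ln (1 + a) <= ln (1 + a * y).
Proof.
  intros Ha Hy. set (c := 1 + a * y). assert (Hc : 0 < c) by (unfold c; nra).
  (* the tangent bound ln z <= z - 1 at z = 1/c and z = (1+a)/c, averaged with weights 1-y, y *)
  pose proof (ln_le_sub_1 (1 / c) ltac:(apply Rdiv_lt_0_compat; lra)) as H1.
  pose proof (ln_le_sub_1 ((1 + a) / c) ltac:(apply Rdiv_lt_0_compat; lra)) as H2.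
  rewrite ln_div in H1, H2 by lra. rewrite ln_1 in H1.
  assert (E : (1 - y) * (1 / c - 1) + y * ((1 + a) / c - 1) = 0) by (unfold c in *; field; lra).
  assert ((1 - y) * (0 - ln c) <= (1 - y) * (1 / c - 1)) by (apply Rmult_le_compat_l; lra).
  assert (y * (ln (1 + a) - ln c) <= y * ((1 + a) / c - 1)) by (apply Rmult_le_compat_l; lra).
  fold c. lra.
Qed.

Lemma ln_1_plus_ge_quadratic a y : 0 < a -> 0 <= y ->
  ln (1 + a) * (y - y * y / 4) <= ln (1 + a * y).
Proof.
  intros Ha Hy. assert (HL : 0 < ln (1 + a)) by (apply ln_gt_0; lra).
  destruct (Rle_dec y 1) as [Hy1 | Hy1].
  - pose proof (ln_1_plus_concave a y Ha (conj Hy Hy1)).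
    assert (0 <= ln (1 + a) * (y * y)) by (apply Rmult_le_pos; nra).
    lra.
  - assert (ln (1 + a) <= ln (1 + a * y)) by (apply ln_le; nra).
    assert (ln (1 + a) * (y - y * y / 4) <= ln (1 + a) * 1)
      by (apply Rmult_le_compat_l; [lra | pose proof (Rle_0_sqr (y - 2)); unfold Rsqr in *; nra]).
    lra.
Qed.

Lemma Rbar_avg_ge_half_ln b P n : 1 < b -> 0 < P -> (1 <= n)%nat ->
  ln (1 + P * INR n) / (2 * ln b) <= Rbar_avg b P n.
Proof.
  intros Hb HP Hn. pose proof (ln_gt_0 b Hb) as Hlb.
  set (m := INR n). assert (Hm : 0 < m) by (apply lt_0_INR; lia).
  set (L := ln (1 + P * m) / ln b).
  assert (HL : 0 < L) by (apply Rdiv_lt_0_compat; [apply ln_gt_0; nra | exact Hlb]).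
  assert (Hsq : continuous2 (fun x y => x * x + y * y)) by (intros ? ?; continuity_2d).
  assert (Hsq2 : continuous2 (fun x y => (x * x + y * y) * (x * x + y * y)))
    by (intros ? ?; continuity_2d).
  set (g := fun x y => L / m * (x * x + y * y)
                       + - L / (4 * m * m) * ((x * x + y * y) * (x * x + y * y))).
  assert (Hmin : forall x y, g x y <= rate b P x y).
  { intros x y. unfold g. set (X := x * x + y * y). assert (HX : 0 <= X) by (unfold X; nra).
    pose proof (ln_1_plus_ge_quadratic (P * m) (X / m) ltac:(nra)
                  ltac:(apply Rdiv_le_0_compat; lra)) as Hq.
    unfold rate, logb. fold X.
    replace (1 + X * P) with (1 + P * m * (X / m)) by (field; lra).
    replace (L / m * X + - L / (4 * m * m) * (X * X))
      with (ln (1 + P * m) * (X / m - X / m * (X / m) / 4) / ln b) by (unfold L; field; lra).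
    apply Rmult_le_compat_r; [left; apply Rinv_0_lt_compat, Hlb | exact Hq]. }
  assert (Hg : continuous2 g) by (intros ? ?; unfold g; continuity_2d).
  pose proof (phasor_mean_le n g (rate b P) Hg (continuous2_rate b P HP) Hmin 0 0) as H.
  unfold g in H.
  rewrite phasor_mean_lin, phasor_mean_sqnorm, phasor_mean_sqnorm_sq,
    <- Rbar_avg_phasor_mean in H by assumption.
  fold m in H.
  replace (ln (1 + P * m) / (2 * ln b)) with (L / 2) by (unfold L; field; lra).
  replace (L / m * (0 * 0 + 0 * 0 + m)
           + - L / (4 * m * m) * ((0 * 0 + 0 * 0) * (0 * 0 + 0 * 0)
                                  + 4 * m * (0 * 0 + 0 * 0) + 2 * m * m - m))
    with (L / 2 + L / (4 * m)) in H by (field; lra).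
  assert (0 < L / (4 * m)) by (apply Rdiv_lt_0_compat; lra).
  lra.
Qed.

Lemma is_lim_seq_ln_1_plus_linear b P : 1 < b -> 0 < P ->
  is_lim_seq (fun n => ln (1 + P * INR n) / (2 * ln b)) p_infty.
Proof.
  intros Hb HP. pose proof (ln_gt_0 b Hb).
  apply (is_lim_seq_mult _ _ p_infty (/ (2 * ln b))).
  2: apply is_lim_seq_const.
  2: apply is_Rbar_mult_p_infty_pos; simpl; apply Rinv_0_lt_compat; lra.
  apply (is_lim_comp_seq ln _ p_infty p_infty); [apply is_lim_ln_p | exists 0%nat; discriminate |].
  apply (is_lim_seq_plus _ _ 1 p_infty); [apply is_lim_seq_const | | reflexivity].
  apply (is_lim_seq_mult _ _ P p_infty); [apply is_lim_seq_const | apply is_lim_seq_INR |].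
  apply is_Rbar_mult_sym, is_Rbar_mult_p_infty_pos. simpl; lra.
Qed.

Theorem proposition3 (b P : R) (hb : 1 < b) (hP : 0 < P) :
  (forall i : nat, Rbar_avg b P i < Rbar_avg b P (S i)) /\
  is_lim_seq (fun i : nat => Rbar_avg b P i) p_infty.
Proof.
  split.
  - intro i. rewrite !Rbar_avg_phasor_mean, phasor_mean_S_last.
    apply phasor_mean_lt.
    + apply continuous2_rate, hP.
    + apply continuous2_circle_mean, continuous2_rate, hP.
    + intros x y; apply rate_lt_circle_mean; assumption.
  - apply (is_lim_seq_le_p_loc (fun n => ln (1 + P * INR n) / (2 * ln b))).
    + exists 1%nat. intros n Hn. apply Rbar_avg_ge_half_ln; assumption.
    + apply is_lim_seq_ln_1_plus_linear; assumption.
Qed.
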